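(* If $n\ge2$ is even, there are a locally finite specular $n$-distributive variety and a locally finite specular $n$-alvin variety, neither of which is $(n-1)$-distributive. If $n\ge2$, there is a locally finite specular $n$-directed-distributive variety which is not $(n-1)$-directed-distributive.
   Context: Ternary terms $t_0,\dots,t_n$ with $t_0(x,y,z)=x$, $t_n(x,y,z)=z$, $t_h(x,y,x)=x$ for all $h$ are J\'onsson terms if $t_h(x,x,z)=t_{h+1}(x,x,z)$ for even $h$ and $t_h(x,z,z)=t_{h+1}(x,z,z)$ for odd $h$ ($0\le h<n$); alvin terms if even/odd are exchanged; directed J\'onsson terms if $t_h(x,z,z)=t_{h+1}(x,x,z)$ for all $0\le h<n$. A variety is specular $n$-distributive (specular $n$-alvin, specular $n$-directed-distributive) if it has J\'onsson (alvin, directed J\'onsson) terms $t_0,\dots,t_n$ that also satisfy $t_i(x,y,z)=t_{n-i}(z,y,x)$ for all $0\le i\le n$. $n$-distributive and $n$-directed-distributive are defined likewise without the specularity equations. *)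

From mathcomp Require Import all_boot.
Set Implicit Arguments. Unset Strict Implicit. Unset Printing Implicit Defensive.

Inductive term (F : Type) (ar : F -> nat) (X : Type) : Type :=
| Var of X
| App (f : F) of ('I_(ar f) -> term ar X).

Fixpoint eval (F : Type) (ar : F -> nat) (X A : Type)
  (ops : forall f : F, ('I_(ar f) -> A) -> A) (v : X -> A) (t : term ar X) : A :=
  match t with
  | Var x => v x
  | App f ts => ops f (fun i => eval ops v (ts i))
  end.

Record variety := Variety {
  sym : Type;
  arity : sym -> nat;
  axioms : term arity nat -> term arity nat -> Prop }.
Arguments sym : clear implicits.
Arguments arity : clear implicits.
Arguments axioms : clear implicits.

Definition ops_of (V : variety) (A : Type) := forall f : sym V, ('I_(@arity V f) -> A) -> A.

Definition models (V : variety) (A : Type) (ops : ops_of V A) : Prop :=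
  forall s t, axioms V s t -> forall v : nat -> A, eval ops v s = eval ops v t.

(* Locally finite: every finitely generated algebra of V is finite,
   i.e. the subalgebra generated by n elements (the set of values of n-ary
   terms at the generators) is finite. *)
Definition locally_finite (V : variety) : Prop :=
  forall (A : Type) (ops : ops_of V A), models ops ->
  forall (n : nat) (g : 'I_n -> A),
  exists (m : nat) (e : 'I_m -> A),
    forall t : term (@arity V) 'I_n, exists i, eval ops g t = e i.

(* ternary terms: variables x, y, z are 0, 1, 2 *)
Definition tterm (V : variety) := term (@arity V) 'I_3.

Definition ev3 (V : variety) (A : Type) (ops : ops_of V A) (t : tterm V) (x y z : A) : A :=
  eval ops (fun i : 'I_3 => nth x [:: x; y; z] i) t.

Definition sat3 (V : variety)
  (P : forall A : Type, ops_of V A -> A -> A -> A -> Prop) : Prop :=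
  forall (A : Type) (ops : ops_of V A), models ops -> forall x y z : A, P A ops x y z.

Definition base_terms (V : variety) (n : nat) (t : nat -> tterm V) : Prop :=
  sat3 (fun A ops x y z =>
    [/\ ev3 ops (t 0) x y z = x, ev3 ops (t n) x y z = z &
        forall h, h <= n -> ev3 ops (t h) x y x = x]).

Definition jonsson_terms (V : variety) (n : nat) (alvin : bool) (t : nat -> tterm V) : Prop :=
  base_terms n t /\
  sat3 (fun A ops x y z => forall h, h < n ->
    if odd h (+) alvin
    then ev3 ops (t h) x z z = ev3 ops (t h.+1) x z z
    else ev3 ops (t h) x x z = ev3 ops (t h.+1) x x z).

Definition directed_jonsson_terms (V : variety) (n : nat) (t : nat -> tterm V) : Prop :=
  base_terms n t /\
  sat3 (fun A ops x y z => forall h, h < n ->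
    ev3 ops (t h) x z z = ev3 ops (t h.+1) x x z).

Definition specular (V : variety) (n : nat) (t : nat -> tterm V) : Prop :=
  sat3 (fun A ops x y z => forall i, i <= n ->
    ev3 ops (t i) x y z = ev3 ops (t (n - i)) z y x).

Definition n_distributive (V : variety) (n : nat) : Prop :=
  exists t : nat -> tterm V, jonsson_terms n false t.
Definition specular_n_distributive (V : variety) (n : nat) : Prop :=
  exists t : nat -> tterm V, jonsson_terms n false t /\ specular n t.
Definition specular_n_alvin (V : variety) (n : nat) : Prop :=
  exists t : nat -> tterm V, jonsson_terms n true t /\ specular n t.
Definition n_directed_distributive (V : variety) (n : nat) : Prop :=
  exists t : nat -> tterm V, directed_jonsson_terms n t.
Definition specular_n_directed_distributive (V : variety) (n : nat) : Prop :=
  exists t : nat -> tterm V, directed_jonsson_terms n t /\ specular n t.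

(* All the varieties are generated by one finite algebra on {0, ..., n-1}
   with ternary basic operations f_h (h : nat).  The operation f_h walks from
   x towards z: f_h(x,y,z) is the target position h (counted from x, or n - h
   counted from z when z < x), lowered by one when the middle argument y is not
   on the side prescribed by a sign up(h), and clamped to the interval between
   x and z.  With a constant sign the terms t_h = f_h are directed Jonsson
   terms; with alternating signs they are Jonsson or alvin terms (n even); in
   all cases they are specular, t_h(x,y,z) = t_(n-h)(z,y,x).

   Conversely, every f_h preserves the ternary relation "u > 0 or |p - q| <= 1",
   hence so does every term.  Evaluated at x = 0, z = N = n - 1, the sequences
   t_h(0,0,N) and t_h(0,N,N) of a chain of n - 1 (directed) Jonsson terms thus
   grow by at most one per step, so t_(n-1)(0,0,N) cannot reach N. *)

From mathcomp Require Import all_boot zify.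
From Stdlib Require Import Classical ClassicalEpsilon FunctionalExtensionality.
Set Implicit Arguments. Unset Strict Implicit. Unset Printing Implicit Defensive.

Section TermCalculus.
Variables (F : Type) (ar : F -> nat).

Fixpoint rename (X Y : Type) (f : X -> Y) (t : term ar X) : term ar Y :=
  match t with
  | Var x => Var ar (f x)
  | App g ts => App (fun i => rename f (ts i))
  end.

Variables (A : Type) (o : forall f : F, ('I_(ar f) -> A) -> A).

Lemma eval_ext (X : Type) (v w : X -> A) (t : term ar X) :
  (forall x, v x = w x) -> eval o v t = eval o w t.
Proof.
move=> Evw; elim: t => [x|g ts IH] /=; first exact: Evw.
by congr (@o g _); apply: functional_extensionality => i; exact: IH.
Qed.

Lemma eval_rename (X Y : Type) (f : X -> Y) (v : Y -> A) (t : term ar X) :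
  eval o v (rename f t) = eval o (fun x => v (f x)) t.
Proof.
elim: t => [x|g ts IH] //=.
by congr (@o g _); apply: functional_extensionality => i; exact: IH.
Qed.

Lemma eval_preserves (R : A -> A -> A -> Prop) :
  (forall f (a b c : 'I_(ar f) -> A), (forall i, R (a i) (b i) (c i)) ->
     R (@o f a) (@o f b) (@o f c)) ->
  forall (X : Type) (t : term ar X) (e1 e2 e3 : X -> A),
  (forall x, R (e1 x) (e2 x) (e3 x)) -> R (eval o e1 t) (eval o e2 t) (eval o e3 t).
Proof.
move=> HR X; elim=> [x|g ts IH] e1 e2 e3 He /=; first exact: He.
exact: (HR g _ _ _ (fun i => IH i _ _ _ He)).
Qed.

End TermCalculus.
Arguments rename {F ar X Y}.

Definition vars3 (A : Type) (x y z : A) (i : 'I_3) : A := nth x [:: x; y; z] i.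

Definition i0 : 'I_3 := @Ordinal 3 0 isT.
Definition i1 : 'I_3 := @Ordinal 3 1 isT.
Definition i2 : 'I_3 := @Ordinal 3 2 isT.

Lemma vars3_comp (A : Type) (x y z : A) (a b c i : 'I_3) :
  vars3 x y z (vars3 a b c i) = vars3 (vars3 x y z a) (vars3 x y z b) (vars3 x y z c) i.
Proof. by case: i => [[|[|[|i]]] Hi]. Qed.

Lemma vars3_eta (A : Type) (w : 'I_3 -> A) (i : 'I_3) : vars3 (w i0) (w i1) (w i2) i = w i.
Proof. by case: i => [[|[|[|i]]] Hi] //; congr w; apply: val_inj. Qed.

Lemma ev3_rename (V : variety) (A : Type) (ops : ops_of V A) (s : tterm V)
  (a b c : 'I_3) (x y z : A) :
  eval ops (vars3 x y z) (rename (vars3 a b c) s)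
  = ev3 ops s (vars3 x y z a) (vars3 x y z b) (vars3 x y z c).
Proof. by rewrite eval_rename; apply: eval_ext => i; rewrite vars3_comp. Qed.

Section GeneratedVariety.
Variables (F : Type) (ar : F -> nat) (A0 : Type) (o : forall f : F, ('I_(ar f) -> A0) -> A0).

Definition generated_variety : variety :=
  @Variety F ar (fun s t => forall v : nat -> A0, eval o v s = eval o v t).

Lemma generator_models : @models generated_variety A0 o.
Proof. by move=> s t Hst v; apply: Hst. Qed.

Lemma generated_identity (k : nat) (s t : term ar 'I_k) :
  (forall v : 'I_k -> A0, eval o v s = eval o v t) ->
  forall (A : Type) (ops : ops_of generated_variety A), models ops ->
  forall v : 'I_k -> A, eval ops v s = eval ops v t.
Proof.
move=> Hst A ops Hm v.
pose w (j : nat) := if insub j is Some i then v i else eval ops v s.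
have Ew (r : term ar 'I_k) : eval ops (fun i => w (val i)) r = eval ops v r.
  by apply: eval_ext => i; rewrite /w valK.
have Hax : axioms generated_variety (rename val s) (rename val t).
  by move=> u; rewrite !eval_rename; apply: Hst.
by have := Hm _ _ Hax w; rewrite !eval_rename !Ew.
Qed.

Lemma generated_identity3 (s t : term ar 'I_3) (a b c a' b' c' : 'I_3) :
  (forall x y z : A0,
     @ev3 generated_variety A0 o s (vars3 x y z a) (vars3 x y z b) (vars3 x y z c)
     = @ev3 generated_variety A0 o t (vars3 x y z a') (vars3 x y z b') (vars3 x y z c')) ->
  forall (A : Type) (ops : ops_of generated_variety A), models ops -> forall x y z : A,
    ev3 ops s (vars3 x y z a) (vars3 x y z b) (vars3 x y z c)
    = ev3 ops t (vars3 x y z a') (vars3 x y z b') (vars3 x y z c').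
Proof.
move=> Hst A ops Hm x y z; rewrite -!ev3_rename.
apply: (generated_identity _ Hm) => w.
have Ew (r : term ar 'I_3) : eval o w r = eval o (vars3 (w i0) (w i1) (w i2)) r.
  by apply: eval_ext => i; rewrite vars3_eta.
by rewrite !Ew; have := Hst (w i0) (w i1) (w i2); rewrite -!ev3_rename.
Qed.

End GeneratedVariety.

Lemma finite_kernel_image (X A : Type) (T : finType) (g : X -> T) (f : X -> A) :
  (forall x x', g x = g x' -> f x = f x') ->
  exists (m : nat) (e : 'I_m -> A), forall x, exists i, f x = e i.
Proof.
move=> Hker; case: (classic (inhabited X)) => [[x0]|noX]; last first.
  have e : 'I_0 -> A by case=> i; rewrite ltn0.
  by exists 0, e => x; case: noX; exact: inhabits x.
pose e (i : 'I_#|T|) := f (epsilon (inhabits x0) (fun x => g x = enum_val i)).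
exists #|T|, e => x; exists (enum_rank (g x)); apply: Hker.
by rewrite (epsilon_spec (inhabits x0) (fun x' => g x' = _) (ex_intro _ x _)) enum_rankK.
Qed.

(* A variety generated by a finite algebra is locally finite: the value of an
   n-ary term at given generators is determined by its term function on the
   generator, which lives in a finite type. *)
Lemma generated_locally_finite (F : Type) (ar : F -> nat) (A0 : finType)
  (o : forall f : F, ('I_(ar f) -> A0) -> A0) : locally_finite (generated_variety o).
Proof.
move=> A ops Hm k g.
apply: (finite_kernel_image (g := fun t => [ffun w : {ffun 'I_k -> A0} => eval o w t])).
move=> t t' Ett'; apply: (generated_identity _ Hm) => v.
have Ev (r : term ar 'I_k) : eval o v r = eval o [ffun i => v i] r.
  by apply: eval_ext => i; rewrite ffunE.
have := congr1 (fun phi : {ffun {ffun 'I_k -> A0} -> A0} => phi [ffun i => v i]) Ett'.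
by rewrite !Ev !ffunE.
Qed.

Definition clamp (lo hi k : nat) : nat := maxn lo (minn hi k).

(* The basic operation f_h on {0, ..., n-1}: walking from x to z, go to
   position h (n - h from the z end when z < x), one step less when the middle
   argument y is not beyond the starting point exactly when [up] asks for it. *)
Definition step (n h : nat) (up : bool) (x y z : nat) : nat :=
  if x <= z then clamp x z (h - ((x < y) != up))
  else clamp z x ((n - h) - ((z < y) != up)).

(* Every property of [step] below is linear arithmetic once the three
   comparisons deciding its branches are fixed. *)
Ltac step_cases x y z :=
  rewrite /step /clamp; case: (leqP x z); case: (ltnP x y); case: (ltnP z y).

Lemma step_lt n h b x y z : x < n -> z < n -> step n h b x y z < n.
Proof. by step_cases x y z; case: b => /= *; lia. Qed.

Lemma step_xyx n h b x y : step n h b x y x = x.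
Proof. by step_cases x y x; case: b => /= *; lia. Qed.

Lemma step_first n b x y z : x < n -> step n 0 b x y z = x.
Proof. by step_cases x y z; case: b => /= *; lia. Qed.

Lemma step_last n h b x y z : z < n -> n <= h -> step n h b x y z = z.
Proof. by step_cases x y z; case: b => /= *; lia. Qed.

(* Reading the walk from the other end: the source of specularity. *)
Lemma step_specular n h b x y z : h <= n -> step n h b x y z = step n (n - h) b z y x.
Proof.
move=> hn; rewrite /step /clamp subKn //.
by case: (ltngtP x z) => [||->] //=; case: b; case: ltnP; case: ltnP => /= *; lia.
Qed.

Lemma step_directed n h x z : step n h true x z z = step n h.+1 true x x z.
Proof. by rewrite /step /clamp ltnn; case: (leqP x z); case: (ltnP x z) => /= *; lia. Qed.

Lemma step_xxz n h x z : step n h false x x z = step n h.+1 true x x z.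
Proof. by rewrite /step /clamp ltnn; case: (leqP x z); case: (ltnP z x) => /= *; lia. Qed.

Lemma step_xzz n h x z : step n h true x z z = step n h.+1 false x z z.
Proof. by rewrite /step /clamp ltnn; case: (leqP x z); case: (ltnP x z) => /= *; lia. Qed.

(* Either both ends are 0, or it starts at 0
   and stays there (h = 0, or h = 1 with the last step lost), or symmetrically
   it ends at z = 0.  Under [up] the lost step pins down the middle argument. *)
Lemma step_eq0 n h b u1 u2 u3 : u1 < n -> u3 < n -> step n h b u1 u2 u3 = 0 ->
  (u1 = 0 /\ u3 = 0) \/ (h = 0 /\ u1 = 0) \/ (n <= h /\ u3 = 0) \/
  (h = 1 /\ u1 = 0 /\ b ==> (u2 == 0)) \/ (h.+1 = n /\ u3 = 0 /\ b ==> (u2 == 0)).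
Proof. by case: b; step_cases u1 u2 u3 => /= *; lia. Qed.

Ltac step_cases2 p1 p2 p3 q1 q2 q3 :=
  rewrite /step /clamp;
  case: (leqP p1 p3); case: (ltnP p1 p2); case: (ltnP p3 p2);
  case: (leqP q1 q3); case: (ltnP q1 q2); case: (ltnP q3 q2).

Lemma step_lipschitz_outer n h b p1 p2 p3 q1 q2 q3 :
  p1 < n -> p3 < n -> q1 < n -> q3 < n -> q1 <= p1.+1 -> q3 <= p3.+1 ->
  step n h b q1 q2 q3 <= (step n h b p1 p2 p3).+1.
Proof. by case: b; step_cases2 p1 p2 p3 q1 q2 q3 => /= *; lia. Qed.

Lemma step_lipschitz_first n b p1 p2 p3 q1 q2 q3 :
  p1 < n -> p3 < n -> q1 < n -> q3 < n -> q1 <= p1.+1 -> b ==> (q2 <= p2.+1) ->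
  step n 1 b q1 q2 q3 <= (step n 1 b p1 p2 p3).+1.
Proof. by case: b; step_cases2 p1 p2 p3 q1 q2 q3 => /= *; lia. Qed.

Lemma step_lipschitz_last n h b p1 p2 p3 q1 q2 q3 : h.+1 = n ->
  p1 < n -> p3 < n -> q1 < n -> q3 < n -> q3 <= p3.+1 -> b ==> (q2 <= p2.+1) ->
  step n h b q1 q2 q3 <= (step n h b p1 p2 p3).+1.
Proof. by case: b; step_cases2 p1 p2 p3 q1 q2 q3 => /= *; lia. Qed.

Definition guarded (u p q : nat) : Prop := 0 < u \/ q <= p.+1.

Lemma step_guarded n h b u1 u2 u3 p1 p2 p3 q1 q2 q3 :
  u1 < n -> u3 < n -> p1 < n -> p3 < n -> q1 < n -> q3 < n ->
  guarded u1 p1 q1 -> guarded u2 p2 q2 -> guarded u3 p3 q3 ->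
  guarded (step n h b u1 u2 u3) (step n h b p1 p2 p3) (step n h b q1 q2 q3).
Proof.
rewrite /guarded => u1n u3n p1n p3n q1n q3n G1 G2 G3.
have [u0|] := posnP (step n h b u1 u2 u3); [right|by left].
have b_imp (c : bool) (m : nat) : c ==> (m == 0) -> guarded m p2 q2 -> c ==> (q2 <= p2.+1).
  by case: c => //= /eqP ->; rewrite /guarded ltnn => -[].
case: (step_eq0 u1n u3n u0) => [[U1 U3]|[[-> U1]|[[hn U3]|[[-> [U1 c2]]|[hn [U3 c2]]]]]].
- by apply: step_lipschitz_outer => //; lia.
- by rewrite !step_first //; lia.
- by rewrite !step_last //; lia.
- by apply: step_lipschitz_first => //; [lia | exact: b_imp c2 G2].
- by apply: step_lipschitz_last => //; [lia | exact: b_imp c2 G2].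
Qed.

Definition ternary (_ : nat) : nat := 3.

Definition clamp_ops (n : nat) (up : nat -> bool) (h : nat) (a : 'I_(ternary h) -> 'I_n)
  : 'I_n :=
  Ordinal (step_lt h (up h) (a i1) (ltn_ord (a i0)) (ltn_ord (a i2))).
Arguments clamp_ops : clear implicits.

Definition clamp_variety (n : nat) (up : nat -> bool) : variety :=
  generated_variety (clamp_ops n up).

Definition basic_term (h : nat) : term ternary 'I_3 :=
  @App nat ternary 'I_3 h (fun i => Var ternary i).

Lemma ev3_basic n up h (x y z : 'I_n) :
  val (@ev3 (clamp_variety n up) _ (clamp_ops n up) (basic_term h) x y z) = step n h (up h) x y z.
Proof. by []. Qed.

Arguments generated_identity3 {F ar A0 o} s t a b c a' b' c' _ {A ops} Hm x y z.

Lemma clamp_base_terms n up : 0 < n -> base_terms (V := clamp_variety n up) n basic_term.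
Proof.
move=> n_gt0 A ops Hm x y z; split.
- refine (generated_identity3 (basic_term 0) (Var ternary i0) i0 i1 i2 i0 i0 i0 _ Hm x y z).
  by move=> x' y' z'; apply: val_inj; rewrite ev3_basic step_first.
- refine (generated_identity3 (basic_term n) (Var ternary i2) i0 i1 i2 i2 i2 i2 _ Hm x y z).
  by move=> x' y' z'; apply: val_inj; rewrite ev3_basic step_last.
- move=> h _.
  refine (generated_identity3 (basic_term h) (Var ternary i0) i0 i1 i0 i0 i0 i0 _ Hm x y z).
  by move=> x' y' z'; apply: val_inj; rewrite ev3_basic step_xyx.
Qed.

Lemma clamp_specular n up : (forall h, h <= n -> up (n - h) = up h) ->
  specular (V := clamp_variety n up) n basic_term.
Proof.
move=> up_sym A ops Hm x y z h hn.
refine (generated_identity3 (basic_term h) (basic_term (n - h)) i0 i1 i2 i2 i1 i0 _ Hm x y z).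
by move=> x' y' z'; apply: val_inj; rewrite !ev3_basic up_sym // -step_specular.
Qed.

Lemma clamp_directed n : 0 < n ->
  specular_n_directed_distributive (clamp_variety n (fun=> true)) n.
Proof.
move=> n_gt0; exists basic_term; split; last exact: clamp_specular.
split; first exact: clamp_base_terms.
move=> A ops Hm x y z h _.
refine (generated_identity3 (basic_term h) (basic_term h.+1) i0 i2 i2 i0 i0 i2 _ Hm x y z).
by move=> x' y' z'; apply: val_inj; rewrite !ev3_basic step_directed.
Qed.

(* Alternating signs; for n even they are symmetric under h |-> n - h. *)
Definition alternating (al : bool) (h : nat) : bool := odd h (+) al.

Lemma clamp_jonsson n al : 0 < n -> ~~ odd n ->
  exists t, jonsson_terms (V := clamp_variety n (alternating al)) n al t
            /\ specular (V := clamp_variety n (alternating al)) n t.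
Proof.
move=> n_gt0 n_even; exists basic_term; split; last first.
  by apply: clamp_specular => h hn; rewrite /alternating oddB // (negbTE n_even).
split; first exact: clamp_base_terms.
move=> A ops Hm x y z h _; case up_h: (odd h (+) al).
- refine (generated_identity3 (basic_term h) (basic_term h.+1) i0 i2 i2 i0 i2 i2 _ Hm x y z).
  by move=> x' y' z'; apply: val_inj; rewrite !ev3_basic /alternating /= up_h addNb up_h step_xzz.
- refine (generated_identity3 (basic_term h) (basic_term h.+1) i0 i0 i2 i0 i0 i2 _ Hm x y z).
  by move=> x' y' z'; apply: val_inj; rewrite !ev3_basic /alternating /= up_h addNb up_h step_xxz.
Qed.

Definition near (u p q : nat) : Prop := guarded u p q /\ guarded u q p.

Lemma clamp_ops_near n up h (a b c : 'I_(ternary h) -> 'I_n) :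
  (forall i, near (a i) (b i) (c i)) ->
  near (clamp_ops n up h a) (clamp_ops n up h b) (clamp_ops n up h c).
Proof.
rewrite /near => abc.
have [G0 G0'] := abc i0; have [G1 G1'] := abc i1; have [G2 G2'] := abc i2.
by split; apply: step_guarded => //; apply: ltn_ord.
Qed.

(* Along directed Jonsson terms t_h(0,N,N) = t_{h+1}(0,0,N), while each step
   t_h(0,0,N) -> t_h(0,N,N) climbs by at most one: t_{h+1}(0,0,N) <= h. *)
Lemma directed_chain (low high : nat -> nat) k : high 0 = 0 ->
  (forall h, h <= k -> high h <= (low h).+1) -> (forall h, h < k -> high h = low h.+1) ->
  forall h, h < k -> low h.+1 <= h.
Proof.
move=> high0 climb shift; elim=> [|h IH] hk; first by rewrite -shift // high0.
by rewrite -shift //; have := climb h.+1 (ltnW hk); have := IH (ltnW hk); lia.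
Qed.

(* Along Jonsson terms the two sequences alternately stay put, and they never
   differ by more than one: t_h(0,0,N) + [h odd] <= h and t_h(0,N,N) <= h. *)
Lemma jonsson_chain (low high : nat -> nat) k : low 0 = 0 -> high 0 = 0 ->
  (forall h, h <= k -> high h <= (low h).+1 /\ low h <= (high h).+1) ->
  (forall h, h < k -> if odd h then high h = high h.+1 else low h = low h.+1) ->
  forall h, h <= k -> low h + odd h <= h /\ high h <= h.
Proof.
move=> low0 high0 close shift; elim=> [|h IH] hk; first by rewrite low0 high0.
have := IH (ltnW hk); have := shift h hk; have := close h.+1 hk; rewrite oddS.
by case: (odd h) => /=; lia.
Qed.

(* The obstruction, for n = m + 2 elements: bot = 0 and top = N = n - 1. *)
Section Obstruction.
Variables (m : nat) (up : nat -> bool).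
Local Notation ev := (@ev3 (clamp_variety m.+2 up) _ (clamp_ops m.+2 up)).
Local Notation bot := (@ord0 m.+1).
Local Notation top := (@ord_max m.+1).
Local Notation gen := (@generator_models _ _ _ (clamp_ops m.+2 up)).

(* A term satisfying t(0,N,0) = 0 moves by at most one between (0,0,N) and
   (0,N,N): evaluate the preserved relation [near] at these three columns. *)
Lemma term_near (s : term ternary 'I_3) :
  ev s bot top bot = bot ->
  val (ev s bot top top) <= (val (ev s bot bot top)).+1 /\
  val (ev s bot bot top) <= (val (ev s bot top top)).+1.
Proof.
move=> s_xyx.
have columns (i : 'I_3) : near (vars3 bot top bot i) (vars3 bot bot top i) (vars3 bot top top i).
  by case: i => [[|[|[|i]]] Hi] //; rewrite /near /guarded /=; lia.
have := eval_preserves (R := fun u p q : 'I_m.+2 => near u p q) (clamp_ops_near up) s columns.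
rewrite -/(ev s _ _ _) s_xyx /near /guarded /=.
by case=> -[//|?] [//|?]; split.
Qed.

Definition low (t : nat -> tterm (clamp_variety m.+2 up)) (h : nat) : nat :=
  val (ev (t h) bot bot top).
Definition high (t : nat -> tterm (clamp_variety m.+2 up)) (h : nat) : nat :=
  val (ev (t h) bot top top).

Lemma base_profile (t : nat -> tterm (clamp_variety m.+2 up)) : base_terms m.+1 t ->
  [/\ low t 0 = 0, high t 0 = 0, low t m.+1 = m.+1 &
      forall h, h <= m.+1 -> high t h <= (low t h).+1 /\ low t h <= (high t h).+1].
Proof.
move=> base.
have [low0 lowN _] := base _ _ gen bot bot top.
have [high0 _ _] := base _ _ gen bot top top.
have [_ _ xyx] := base _ _ gen bot top bot.
by split=> [||| h hm]; rewrite /low /high ?low0 ?lowN ?high0 //; apply: term_near; apply: xyx.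
Qed.

Lemma not_directed : ~ n_directed_distributive (clamp_variety m.+2 up) m.+1.
Proof.
move=> [t [base directed]].
have [_ high0 lowN near_lh] := base_profile base.
have shift h : h < m.+1 -> high t h = low t h.+1.
  by move=> hm; rewrite /low /high (directed _ _ gen bot bot top h hm).
have := directed_chain high0 (fun h hm => proj1 (near_lh h hm)) shift (ltnSn m).
by rewrite lowN; lia.
Qed.

Lemma not_jonsson : odd m.+1 -> ~ n_distributive (clamp_variety m.+2 up) m.+1.
Proof.
move=> m1_odd [t [base jonsson]].
have [low0 high0 lowN near_lh] := base_profile base.
have shift h : h < m.+1 -> if odd h then high t h = high t h.+1 else low t h = low t h.+1.
  move=> hm; have := jonsson _ _ gen bot bot top h hm.
  by rewrite addbF /low /high; case: (odd h) => ->.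
have := jonsson_chain low0 high0 near_lh shift (leqnn m.+1).
by rewrite lowN m1_odd; lia.
Qed.

End Obstruction.

Theorem corollary6p3 :
  (forall n : nat, 2 <= n -> ~~ odd n ->
     (exists V : variety, locally_finite V /\ specular_n_distributive V n
                          /\ ~ n_distributive V n.-1) /\
     (exists V : variety, locally_finite V /\ specular_n_alvin V n
                          /\ ~ n_distributive V n.-1)) /\
  (forall n : nat, 2 <= n ->
     exists V : variety, locally_finite V /\ specular_n_directed_distributive V n
                         /\ ~ n_directed_distributive V n.-1).
Proof.
split=> [[|[|m]] // _ n_even | [|[|m]] // _].
- have m1_odd : odd m.+1 by move: n_even; rewrite oddS negbK.
  split; [exists (clamp_variety m.+2 (alternating false))
         | exists (clamp_variety m.+2 (alternating true))];
    (split; first exact: generated_locally_finite);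
    by split; [exact: clamp_jonsson | exact: not_jonsson].
- exists (clamp_variety m.+2 (fun=> true)); split; first exact: generated_locally_finite.
  by split; [exact: clamp_directed | exact: not_directed].
Qed.
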